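(* Let $G$ be a Feynman diagram and $A_G\subseteq\mathbb{Z}^n$ the support of $\mathcal{F}_{z,m}$ for generic $(z,m)\in\mathbb{R}^K\times\mathbb{R}^{\mathcal{E}}$. If $a\in A_G\cap A^1_G$ and the coefficient of $x^a$ in $\mathcal{F}_{z,m}$, viewed as a linear function of $(z,m)$, does not depend on any of the $m_e$ ($e\in\mathcal{E}$), then $a$ is a vertex of $\operatorname{conv}(A_G)$.
   Context: $G$ is a connected graph with $n$ internal edges labeled $1,\dots,n$ carrying variables $x_1,\dots,x_n$ and $N$ external edges (edges with an endpoint of degree one), the external ones labeled by $[N]$. $\mathcal{T}$ is the set of spanning trees of $G$ (restricted to internal edges, viewed as subsets of $[n]$); $\ell=\#\text{edges}-\#\text{vertices}+1$. The first Symanzik polynomial is $\mathcal{U}(x)=\sum_{T\in\mathcal{T}}\prod_{e\notin T}x_e$. $\mathcal{W}$ is the set of spanning 2-forests $\{T_1,T_2\}$ (two disjoint acyclic connected subgraphs covering all vertices). Given a linear map $L:\mathbb{R}^K\to\mathbb{R}^{\mathcal{W}}$ and $\mathcal{E}\subseteq[n]$, $\mathcal{F}_{z,m}(x)=\sum_{\{T_1,T_2\}\in\mathcal{W}}L_{T_1,T_2}(z)\prod_{e\notin T_1\sqcup T_2}x_e+\big(\sum_{e\in\mathcal{E}}m_ex_e\big)\mathcal{U}(x)$. Set $A^1_G=\{e_p+\sum_{j\in[n]\setminus T}e_j: T\in\mathcal{T}, p\in T\}$ and $A^2_G=\{2e_q+\sum_{j\in[n]\setminus(T\cup\{q\})}e_j:T\in\mathcal{T},q\notin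 T\}$; $A_G\subseteq A^1_G\cup A^2_G$. *)

From mathcomp Require Import all_boot all_order all_algebra.
From mathcomp Require Import reals.
From mathcomp Require Import mpoly.

Set Implicit Arguments.
Unset Strict Implicit.
Unset Printing Implicit Defensive.

Import Order.TTheory GRing.Theory Num.Theory.
Local Open Scope ring_scope.

(* Graphs.  A (multi)graph G on a finite vertex type V with n internal     *)
(* edges (labelled by 'I_n) and N external edges (labelled by 'I_N); the   *)
(* edge type is 'I_n + 'I_N and [ends e] gives the two endpoints of e      *)
(* (self-loops and multiple edges are allowed).                            *)

Definition edge (n N : nat) := ('I_n + 'I_N)%type.

Section Graph.
Variables (V : finType) (n N : nat) (ends : edge n N -> V * V).

Definition adj (S : {set edge n N}) : rel V := fun u v =>
  [exists e in S, (((ends e).1 == u) && ((ends e).2 == v))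
               || (((ends e).1 == v) && ((ends e).2 == u))].

Definition conn (S : {set edge n N}) (u v : V) : bool := connect (adj S) u v.

(* degree of a vertex (a self-loop counts twice) *)
Definition deg (v : V) : nat :=
  #|[set e : edge n N | (ends e).1 == v]| + #|[set e : edge n N | (ends e).2 == v]|.

(* S has no cycle: no edge of S lies on a cycle, i.e. removing any edge of S
   disconnects its endpoints (a self-loop is a cycle). *)
Definition acyclic (S : {set edge n N}) : bool :=
  [forall e in S, ~~ conn (S :\ e) (ends e).1 (ends e).2].

Definition spanning_tree (S : {set edge n N}) : bool :=
  [forall u, forall v, conn S u v] && acyclic S.

(* spanning 2-forest {T1,T2}, encoded by its edge set T1 ⊔ T2: an acyclic
   spanning subgraph with exactly two connected components (T1 and T2). *)
Definition spanning_2forest (S : {set edge n N}) : bool :=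
  acyclic S &&
  [exists u, exists v, ~~ conn S u v && [forall w, conn S u w || conn S v w]].

Definition feynman_diagram : Prop :=
  [/\ forall u v, conn setT u v,
      forall j : 'I_N, (deg (ends (inr j)).1 == 1%N) || (deg (ends (inr j)).2 == 1%N)
    & forall i : 'I_n, (deg (ends (inl i)).1 != 1%N) && (deg (ends (inl i)).2 != 1%N)].

Definition internal (S : {set edge n N}) : {set 'I_n} := [set i | inl i \in S].

Definition Trees : {set {set 'I_n}} :=
  internal @: [set S | spanning_tree S].

Definition TwoForests : {set {set edge n N}} := [set S | spanning_2forest S].

Variable R : realType.

Definition Symanzik_U : {mpoly R[n]} :=
  \sum_(T in Trees) \prod_(i < n | i \notin T) 'X_i.

(* F_{z,m}(x) = sum_{{T1,T2} in W} L_{T1,T2}(z) prod_{e notin T1 ⊔ T2} x_e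
              + (sum_{e in Em} m_e x_e) U(x).
   L F : 'rV_K -> R is the (T1,T2)-component of the linear map L. *)
Definition Symanzik_F (K : nat) (L : {set edge n N} -> 'rV[R]_K -> R)
    (Em : {set 'I_n}) (z : 'rV[R]_K) (m : 'I_n -> R) : {mpoly R[n]} :=
  \sum_(F in TwoForests) L F z *: \prod_(i < n | inl i \notin F) 'X_i
  + (\sum_(e in Em) m e *: 'X_e) * Symanzik_U.

(* A_G: support of F_{z,m} for generic (z,m), i.e. the exponents whose
   coefficient, a linear function of (z,m), is not identically zero. *)
Definition A_G (K : nat) (L : {set edge n N} -> 'rV[R]_K -> R)
    (Em : {set 'I_n}) (a : 'X_{1..n}) : Prop :=
  exists (z : 'rV[R]_K) (m : 'I_n -> R), (Symanzik_F L Em z m)@_a != 0.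

Definition A1_G (a : 'X_{1..n}) : Prop :=
  exists2 T, T \in Trees &
  exists2 p, p \in T & a = (U_(p) + \sum_(j < n | j \notin T) U_(j))%MM.

End Graph.

Definition pt (R : realType) (n : nat) (a : 'X_{1..n}) : 'rV[R]_n :=
  \row_i ((a i)%:R).

Definition conv (R : realType) (n : nat) (A : 'X_{1..n} -> Prop) : 'rV[R]_n -> Prop :=
  fun x => exists (s : seq 'X_{1..n}) (w : seq R),
    [/\ size w = size s, forall a, a \in s -> A a,
        forall t, t \in w -> 0 <= t, \sum_(t <- w) t = 1
      & x = \sum_(i < size s) w`_i *: pt R (nth 0%MM s i)].

Definition is_vertex (R : realType) (n : nat) (P : 'rV[R]_n -> Prop) (x : 'rV[R]_n) : Prop :=
  P x /\ forall (p q : 'rV[R]_n) (t : R), P p -> P q -> 0 < t < 1 ->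
    x = t *: p + (1 - t) *: q -> p = x /\ q = x.

(* Write [a = e_p + sum_(j notin T) e_j] as the indicator vector of
   [S = {p} ∪ ([n] \ T)].  The linear form with weight 2 outside S, -1 on
   S ∩ E and -2 on S \ E is strictly minimised over A_G at a:
   - a 2-forest monomial is another 0/1 vector, and every coordinate on which
     it differs from a raises the form;
   - a mass monomial [e_e + sum_(j notin T') e_j] (e ∈ E) gains 2 from e_e when
     e ∉ S; when e ∈ S it loses 1 there, but the 0/1 vector [[n] \ T'] alone
     already raises the form by at least 2.  Indeed [[n] \ T'] ≠ S because T \ {p} is not a
     spanning tree (every external edge has a leaf endpoint, so external edges
     lie in every spanning tree), and [[n] \ T'] ≠ S \ {k} for k ∈ S ∩ E since
     otherwise m_k would appear in the coefficient of x^a.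
   A point strictly minimising a linear form over A is a vertex of conv(A). *)
From mathcomp Require Import all_boot all_order all_algebra.
From mathcomp Require Import reals.
From mathcomp Require Import mpoly.
From mathcomp Require Import zify lra.

Set Implicit Arguments.
Unset Strict Implicit.
Unset Printing Implicit Defensive.

Import Order.TTheory GRing.Theory Num.Theory.
Local Open Scope ring_scope.

Lemma ler_sum_term (R : numDomainType) (I : finType) (F : I -> R) k :
  (forall i, 0 <= F i) -> F k <= \sum_i F i.
Proof.
move=> F_ge0; rewrite (bigD1 k) //= -[leLHS]addr0 lerD2l.
by apply: sumr_ge0 => i _.
Qed.

Lemma ler_sum_term2 (R : numDomainType) (I : finType) (F : I -> R) k k' :
  (forall i, 0 <= F i) -> k' != k -> F k + F k' <= \sum_i F i.
Proof.
move=> F_ge0 k'k; rewrite (bigD1 k) //= lerD2l (bigD1 k') //= -[leLHS]addr0.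
by rewrite lerD2l; apply: sumr_ge0 => i _.
Qed.

Section LinearForm.
Variables (R : realType) (n : nat) (c : 'I_n -> R).

Definition lin_form (x : 'rV[R]_n) : R := \sum_i c i * x ord0 i.

Lemma lin_form0 : lin_form 0 = 0.
Proof. by rewrite /lin_form big1 // => i _; rewrite mxE mulr0. Qed.

Lemma lin_formD x y : lin_form (x + y) = lin_form x + lin_form y.
Proof. by rewrite /lin_form -big_split; apply: eq_bigr => i _; rewrite mxE mulrDr. Qed.

Lemma lin_formZ k x : lin_form (k *: x) = k * lin_form x.
Proof. by rewrite /lin_form mulr_sumr; apply: eq_bigr => i _; rewrite mxE mulrCA. Qed.

Lemma lin_form_sum k (F : 'I_k -> 'rV[R]_n) :
  lin_form (\sum_(i < k) F i) = \sum_(i < k) lin_form (F i).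
Proof. exact: (big_morph _ lin_formD lin_form0). Qed.

Lemma lin_form_ptB a b :
  lin_form (pt R b) - lin_form (pt R a) = \sum_i c i * ((b i)%:R - (a i)%:R).
Proof. by rewrite /lin_form -sumrB; apply: eq_bigr => i _; rewrite !mxE mulrBr. Qed.

Variables (A : 'X_{1..n} -> Prop) (a : 'X_{1..n}).
Hypothesis strict_min : forall b, A b -> b != a -> lin_form (pt R a) < lin_form (pt R b).

Lemma lin_form_conv_ge x : conv A x ->
  lin_form (pt R a) <= lin_form x /\ (lin_form x = lin_form (pt R a) -> x = pt R a).
Proof.
case=> s [w [size_w sA w_ge0 w_sum1 ->]].
set d := fun i : 'I_(size s) => lin_form (pt R (nth 0%MM s i)) - lin_form (pt R a).
have w_sum : \sum_(i < size s) w`_i = 1 by rewrite -size_w -w_sum1 (big_nth 0) big_mkord.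
have d_ge0 (i : 'I_(size s)) : 0 <= d i.
  rewrite subr_ge0; have [->|ne] := eqVneq (nth 0%MM s i) a; first by [].
  by apply/ltW/strict_min => //; apply/sA/mem_nth.
have term_ge0 (i : 'I_(size s)) : 0 <= w`_i * d i.
  by rewrite mulr_ge0 // w_ge0 // mem_nth // size_w.
have diffE : lin_form (\sum_(i < size s) w`_i *: pt R (nth 0%MM s i)) - lin_form (pt R a)
    = \sum_(i < size s) w`_i * d i.
  rewrite lin_form_sum -[X in _ - X]mul1r -w_sum mulr_suml -sumrB.
  by apply: eq_bigr => i _; rewrite lin_formZ mulrBr.
split; first by rewrite -subr_ge0 diffE sumr_ge0.
move=> eq_form; have sum0 : \sum_(i < size s) w`_i * d i = 0.
  by rewrite -diffE eq_form subrr.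
rewrite -[RHS]scale1r -w_sum scaler_suml; apply: eq_bigr => i _.
have /eqP := psumr_eq0P (fun i _ => term_ge0 i) sum0 (i := i) isT; rewrite mulf_eq0.
case/orP=> [/eqP-> | /eqP d0]; first by rewrite !scale0r.
have [-> // | ne] := eqVneq (nth 0%MM s i) a.
have := strict_min (sA _ (mem_nth 0%MM (ltn_ord i))) ne.
by rewrite -subr_gt0 -/(d i) d0 ltxx.
Qed.

Lemma is_vertex_conv_strict_min : A a -> is_vertex (conv A) (pt R a).
Proof.
move=> Aa; split.
  exists [:: a], [:: 1]; split => //.
  - by move=> b; rewrite inE => /eqP ->.
  - by move=> t; rewrite inE => /eqP ->.
  - by rewrite big_seq1.
  - by rewrite big_ord1 /= scale1r.
move=> p q t convp convq /andP[t_gt0 t_lt1] aE.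
have [ap pa] := lin_form_conv_ge convp.
have [aq qa] := lin_form_conv_ge convq.
have formE : lin_form (pt R a) = t * lin_form p + (1 - t) * lin_form q.
  by rewrite aE lin_formD !lin_formZ.
by split; [apply: pa | apply: qa]; nra.
Qed.

End LinearForm.

Section IndicatorGap.
Variables (R : realType) (n : nat) (S E : {set 'I_n}).

Definition gap_weight (s e : bool) : R := if s then (if e then -1 else -2) else 2.

Definition gap_term (x s e : bool) : R := gap_weight s e * (x%:R - s%:R).

(* The increase of the linear form [gap_weight (i \in S) (i \in E)] from the
   indicator vector of S to that of X. *)
Definition gap (X : {set 'I_n}) : R := \sum_i gap_term (i \in X) (i \in S) (i \in E).

Lemma gap_term_ge0 x s e : 0 <= gap_term x s e.
Proof. by case: x; case: s; case: e; rewrite /gap_term /gap_weight /=; lra. Qed.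

Lemma gap_term_gt0 x s e : x != s -> 0 < gap_term x s e.
Proof. by case: x; case: s; case: e; rewrite /gap_term /gap_weight //=; lra. Qed.

Lemma gap_term_ge1 x s e : ~~ x && s -> 1 <= gap_term x s e.
Proof. by case: x; case: s; case: e; rewrite /gap_term /gap_weight //=; lra. Qed.

Lemma gap_term_ge2 x s e : x && ~~ s || [&& ~~ x, s & ~~ e] -> 2 <= gap_term x s e.
Proof. by case: x; case: s; case: e; rewrite /gap_term /gap_weight //=; lra. Qed.

Let gap_ge_term (X : {set 'I_n}) k : gap_term (k \in X) (k \in S) (k \in E) <= gap X.
Proof.
exact: (ler_sum_term (F := fun i => gap_term (i \in X) _ _) k (fun=> gap_term_ge0 _ _ _)).
Qed.

Lemma gap_ge0 (X : {set 'I_n}) : 0 <= gap X.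
Proof. by apply: sumr_ge0 => i _; apply: gap_term_ge0. Qed.

Lemma gap_gt0 (X : {set 'I_n}) : X != S -> 0 < gap X.
Proof.
rewrite eqEsubset negb_and => /orP[/subsetPn[i iX iS] | /subsetPn[i iS iX]].
  by apply: lt_le_trans (gap_ge_term X i); apply: gap_term_gt0; rewrite iX (negbTE iS).
by apply: lt_le_trans (gap_ge_term X i); apply: gap_term_gt0; rewrite iS (negbTE iX).
Qed.

Lemma gap_ge2 (X : {set 'I_n}) :
  X != S -> (forall k, k \in S -> k \in E -> X != S :\ k) -> 2 <= gap X.
Proof.
move=> XS noD1.
have [/subsetPn[i iX iS] | /negbNE subXS] := boolP (~~ (X \subset S)).
  by apply: le_trans (gap_ge_term X i); apply: gap_term_ge2; rewrite iX iS.
have /subsetPn[k kS kX] : ~~ (S \subset X).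
  by apply: contra XS => subSX; rewrite eqEsubset subXS subSX.
have [kE | kNE] := boolP (k \in E); last first.
  by apply: le_trans (gap_ge_term X k); apply: gap_term_ge2; rewrite kS (negbTE kX) kNE orbT.
have /subsetPn[k' /setD1P[k'k k'S] k'X] : ~~ (S :\ k \subset X).
  apply: contra (noD1 k kS kE) => subSkX; rewrite eqEsubset subSkX andbT.
  apply/subsetP => i iX; rewrite in_setD1 (subsetP subXS) // andbT.
  by apply: contraNneq kX => <-.
apply: le_trans (ler_sum_term2 (F := fun i => gap_term (i \in X) (i \in S) (i \in E))
                                (fun=> gap_term_ge0 _ _ _) k'k).
by rewrite -[2]/(1 + 1) lerD // gap_term_ge1 // ?kX ?k'X ?kS ?k'S.
Qed.
End IndicatorGap.

Lemma prod_mpolyX (R : nzRingType) (n : nat) (P : pred 'I_n) :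
  \prod_(i < n | P i) ('X_i : {mpoly R[n]}) = 'X_[(\sum_(i < n | P i) U_(i))%MM].
Proof. by rewrite (big_morph (fun m => 'X_[m]) (@mpolyXD n R) (@mpolyX0 n R)). Qed.

Lemma mnm_sum1E (n : nat) (P : pred 'I_n) i : (\sum_(j < n | P j) U_(j))%MM i = P i.
Proof.
rewrite mnm_sumE big_mkcond (bigD1 i) //= mnm1E eqxx big1 => [|j /negbTE ji].
  by rewrite addn0; case: (P i).
by rewrite mnm1E ji; case: (P j).
Qed.

Section SpanningTrees.
Variables (V : finType) (n N : nat) (ends : edge n N -> V * V).

Lemma leaf_edge_in_spanning_tree v e S :
  deg ends v = 1%N -> (ends e).1 = v \/ (ends e).2 = v ->
  spanning_tree ends S -> e \in S.
Proof.
move=> deg_v ve /andP[/forallP connS _].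
set A := [set e | (ends e).1 == v]; set B := [set e | (ends e).2 == v].
have cardAB : (#|A :|: B| + #|A :&: B| = 1)%N by rewrite cardsUI.
have eAB : e \in A :|: B by rewrite !inE; case: ve => ->; rewrite eqxx ?orbT.
pose w := if (ends e).1 == v then (ends e).2 else (ends e).1.
have wv : w != v.
  rewrite /w; case: ((ends e).1 =P v) => [e1v | ?]; last exact/eqP.
  apply/eqP => e2v.
  have eAiB : e \in A :&: B by rewrite !inE e1v e2v eqxx.
  by move: cardAB; rewrite (cardD1 e (A :|: B)) (cardD1 e (A :&: B)) eAB eAiB; lia.
have /connectP[[|x walk] /= path_vw wE] := forallP (connS v) w.
  by rewrite wE eqxx in wv.
case/andP: path_vw => /existsP[e' /andP[e'S e'v]] _.
have e'AB : e' \in A :|: B.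
  by rewrite !inE; case/orP: e'v => /andP[/eqP-> /eqP->]; rewrite eqxx ?orbT.
have le1 : (#|A :|: B| <= 1)%N by rewrite -cardAB leq_addr.
by move/card_le1_eqP: le1 => /(_ e e' eAB e'AB) <-.
Qed.

Lemma external_in_spanning_tree S j :
  feynman_diagram ends -> spanning_tree ends S -> inr j \in S.
Proof.
case=> _ leaf_ext _ treeS.
case/orP: (leaf_ext j) => /eqP deg1.
  by apply: leaf_edge_in_spanning_tree deg1 _ treeS; left.
by apply: leaf_edge_in_spanning_tree deg1 _ treeS; right.
Qed.

(* Since external edges lie in every spanning tree, [internal] is injective on
   spanning trees; removing an internal edge from a tree disconnects it. *)
Lemma Trees_setD1 T p :
  feynman_diagram ends -> T \in Trees ends -> p \in T -> T :\ p \notin Trees ends.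
Proof.
move=> HG /imsetP[S]; rewrite inE => treeS ->; rewrite inE => pS.
apply/negP => /imsetP[S']; rewrite inE => treeS' intS'.
have S'E : S' = S :\ inl p.
  apply/setP => -[i|j]; last by rewrite !inE !external_in_spanning_tree.
  by move/setP: intS' => /(_ i); rewrite !inE (inj_eq inl_inj) => <-.
case/andP: treeS => _ /forallP/(_ (inl p)); rewrite -S'E pS /=.
by case/andP: treeS' => /forallP/(_ (ends (inl p)).1)/forallP/(_ (ends (inl p)).2) ->.
Qed.

End SpanningTrees.

Section SymanzikF.
Variables (R : realType) (V : finType) (n N K : nat) (ends : edge n N -> V * V).
Variables (L : {set edge n N} -> 'rV[R]_K -> R) (Em : {set 'I_n}).

Local Notation SF := (Symanzik_F ends L Em).

Lemma mcoeff_Symanzik_F z m b :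
  (SF z m)@_b =
  \sum_(F in TwoForests ends) L F z * ((\sum_(i < n | inl i \notin F) U_(i))%MM == b)%:R
  + \sum_(e in Em) \sum_(T in Trees ends)
      m e * ((U_(e) + \sum_(i < n | i \notin T) U_(i))%MM == b)%:R.
Proof.
have mcoeff_sum := big_morph (@mcoeff n R b) (@mcoeffD n R b) (@mcoeff0 n R b).
rewrite /Symanzik_F mcoeffD; congr (_ + _).
  by rewrite mcoeff_sum; apply: eq_bigr => F _; rewrite mcoeffZ prod_mpolyX mcoeffX.
rewrite mulr_suml mcoeff_sum; apply: eq_bigr => e _.
rewrite /Symanzik_U mulr_sumr mcoeff_sum; apply: eq_bigr => T _.
by rewrite -scalerAl mcoeffZ prod_mpolyX -mpolyXD mcoeffX.
Qed.

Lemma A_G_support b : A_G ends L Em b ->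
  [exists F in TwoForests ends, (\sum_(i < n | inl i \notin F) U_(i))%MM == b] ||
  [exists e in Em, exists T in Trees ends, (U_(e) + \sum_(i < n | i \notin T) U_(i))%MM == b].
Proof.
case=> z [m]; apply: contraNT; rewrite negb_or => /andP[/existsPn noF /existsPn noT].
apply/eqP; rewrite mcoeff_Symanzik_F big1 => [|F WF]; last first.
  by have := noF F; rewrite WF /= => /negbTE->; rewrite mulr0.
rewrite add0r big1 // => e eEm; rewrite big1 // => T treeT.
have := noT e; rewrite eEm /= => /existsPn/(_ T).
by rewrite treeT /= => /negbTE->; rewrite mulr0.
Qed.

Definition mass_free (b : 'X_{1..n}) : Prop :=
  forall z (m m' : 'I_n -> R), (SF z m)@_b = (SF z m')@_b.

Lemma mass_free_neq b k T : mass_free b -> k \in Em -> T \in Trees ends ->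
  (U_(k) + \sum_(i < n | i \notin T) U_(i))%MM != b.
Proof.
move=> free_b kEm treeT; apply/eqP => kTb.
have := free_b 0 (fun i => (i == k)%:R) (fun _ => 0); rewrite !mcoeff_Symanzik_F => /addrI.
rewrite [RHS]big1 => [|e _]; last by rewrite big1 // => T' _; rewrite mul0r.
rewrite (bigD1 k) //= [X in _ + X]big1 => [|e /andP[_ /negbTE->]]; last first.
  by rewrite big1 // => T' _; rewrite mul0r.
rewrite addr0 eqxx; under eq_bigr do rewrite mul1r.
move/(psumr_eq0P (fun _ _ => ler0n _ _))/(_ _ treeT).
by rewrite kTb eqxx => /eqP; rewrite oner_eq0.
Qed.

Section TreePoint.
Hypothesis HG : feynman_diagram ends.
Variables (T : {set 'I_n}) (p : 'I_n).
Hypotheses (treeT : T \in Trees ends) (pT : p \in T).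

Local Notation S := (p |: ~: T).
Local Notation a := (U_(p) + \sum_(j < n | j \notin T) U_(j))%MM.

Lemma tree_pointE i : a i = (i \in S).
Proof.
rewrite mnmDE mnm1E mnm_sum1E !inE.
by have [->|] := eqVneq i p; rewrite ?pT.
Qed.

Lemma A_G_strict_min : mass_free a ->
  forall b, A_G ends L Em b -> b != a ->
  lin_form (fun i => gap_weight R (i \in S) (i \in Em)) (pt R a) <
  lin_form (fun i => gap_weight R (i \in S) (i \in Em)) (pt R b).
Proof.
move=> free_a b /A_G_support/orP[/existsP[F /andP[_ /eqP<-]] |
  /existsP[e /andP[eEm /existsP[T' /andP[treeT' /eqP<-]]]]] ba;
  rewrite -subr_gt0 lin_form_ptB.
  have -> : \sum_i gap_weight R (i \in S) (i \in Em)
              * (((\sum_(j < n | inl j \notin F) U_(j))%MM i)%:R - (a i)%:R) =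
            gap R S Em [set i | inl i \notin F].
    by apply: eq_bigr => i _; rewrite /gap_term mnm_sum1E tree_pointE !inE.
  apply: gap_gt0; apply: contraNneq ba => XS; apply/eqP/mnmP => i.
  by rewrite mnm_sum1E tree_pointE -XS inE.
have -> : \sum_i gap_weight R (i \in S) (i \in Em)
            * (((U_(e) + \sum_(j < n | j \notin T') U_(j))%MM i)%:R - (a i)%:R) =
          gap_weight R (e \in S) (e \in Em) + gap R S Em (~: T').
  rewrite /gap (bigD1 e) //= [in RHS](bigD1 e) //= addrA; congr (_ + _).
    rewrite mnmDE mnm1E mnm_sum1E tree_pointE eqxx !inE natrD /gap_term.
    by rewrite -addrA mulrDr mulr1.
  apply: eq_bigr => i ie.
  by rewrite /gap_term mnmDE mnm1E mnm_sum1E tree_pointE in_setC eq_sym (negbTE ie).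
case: (e \in S); last by have := gap_ge0 R S Em (~: T'); rewrite /gap_weight; lra.
have : 2 <= gap R S Em (~: T').
  apply: gap_ge2.
    apply: contraNneq (Trees_setD1 HG treeT pT) => T'S.
    suff -> : T :\ p = T' by [].
    by rewrite -[T']setCK T'S setCU setCK setIC -setDE.
  move=> k kS kEm; apply: contraNneq (mass_free_neq free_a kEm treeT') => T'Sk.
  apply/eqP/mnmP => i; rewrite mnmDE mnm1E mnm_sum1E tree_pointE.
  move/setP/(_ i): T'Sk; rewrite in_setC in_setD1 => ->.
  by have [->|] := eqVneq i k; rewrite ?kS.
by rewrite /gap_weight eEm; lra.
Qed.

End TreePoint.
End SymanzikF.

Theorem mainTheorem17 (R : realType) (V : finType) (n N K : nat)
  (ends : edge n N -> V * V)
  (HG : feynman_diagram ends)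
  (L : {set edge n N} -> 'rV[R]_K -> R)
  (HL : forall F (c : R) (z1 z2 : 'rV[R]_K), L F (c *: z1 + z2) = c * L F z1 + L F z2)
  (Em : {set 'I_n})
  (a : 'X_{1..n})
  (HaA : A_G ends L Em a)
  (Ha1 : A1_G ends a)
  (Hnom : forall (z : 'rV[R]_K) (m m' : 'I_n -> R),
      (Symanzik_F ends L Em z m)@_a = (Symanzik_F ends L Em z m')@_a) :
  is_vertex (conv (A_G ends L Em)) (pt R a).
Proof.
case: Ha1 => T treeT [p pT aE]; subst a.
exact: is_vertex_conv_strict_min (A_G_strict_min HG treeT pT Hnom) HaA.
Qed.
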